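(* Let $d\geq 1$ and let $c>b>0$ be integers with $d$-binomial expansions $b=\binom{b_d}{d}+\cdots+\binom{b_j}{j}$, $b_d>b_{d-1}>\cdots>b_j\geq j\geq 1$, and $c=\binom{c_d}{d}+\cdots+\binom{c_i}{i}$, $c_d>\cdots>c_i\geq i\geq 1$. Then $b^{(d)}=c^{(d)}$ if and only if $j\geq 2$ and $c-b\leq j-1$.
   Context: For a positive integer $d$, every integer $a>0$ has a unique representation (the $d$-binomial or Macaulay expansion) $a=\binom{a_d}{d}+\binom{a_{d-1}}{d-1}+\cdots+\binom{a_j}{j}$ with $a_d>a_{d-1}>\cdots>a_j\geq j\geq 1$. For such an expansion one defines $a^{(d)}=\binom{a_d}{d+1}+\cdots+\binom{a_j}{j+1}$ (with $\binom{m}{r}=0$ for $m<r$). *)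

From mathcomp Require Import all_boot.
Set Implicit Arguments. Unset Strict Implicit. Unset Printing Implicit Defensive.

(* A d-binomial (Macaulay) expansion of a: the lowest index j and the
   coefficients f k = a_k for j <= k <= d, with
   a = C(a_d,d) + ... + C(a_j,j),  a_d > a_{d-1} > ... > a_j >= j >= 1. *)
Definition is_dexp (d a j : nat) (f : nat -> nat) : Prop :=
  [/\ 1 <= j, j <= d,
      (forall k, j <= k -> k < d -> f k < f k.+1),
      j <= f j &
      a = \sum_(j <= k < d.+1) 'C(f k, k)].

(* a^(d) computed from the expansion (j, f):
   C(a_d, d+1) + ... + C(a_j, j+1). *)
Definition dexp_up (d j : nat) (f : nat -> nat) : nat :=
  \sum_(j <= k < d.+1) 'C(f k, k.+1).

From mathcomp Require Import all_boot.
Set Implicit Arguments. Unset Strict Implicit. Unset Printing Implicit Defensive.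

(* The theorem follows from a study of how the
   expansion changes when a is replaced by a + 1:
   - if j >= 2, appending the term C(j-1, j-1) = 1 gives the expansion of
     a + 1, with lowest index j - 1 and the same value of a^(d), since
     C(j-1, j) = 0 (dexp_succ_low);
   - if j = 1, then (a + 1)^(d) > a^(d) (dexp_succ_one, by induction on d,
     distinguishing whether adding 1 carries into the top coefficient).
   Iterating n times from b (dexp_iter): a^(d) is unchanged as long as
   n < j, and strictly increases as soon as n >= j.  Since expansions are
   unique (dexp_uniq, from the bound C(a_d, d) <= a < C(a_d + 1, d)), the
   expansion of c = b + (c - b) obtained this way is the given one, which
   yields the theorem. *)

(* Both a and a^(d) are bounded by the next binomial above their top term;
   e selects between the two sums (e = 0 for a, e = 1 for a^(d)). *)
Lemma dexp_sum_lt (e : nat) d a j f : e <= 1 -> is_dexp d a j f ->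
  \sum_(j <= k < d.+1) 'C(f k, k + e) < 'C((f d).+1, d + e).
Proof.
move=> le_e1 [+ + + + _]; elim: d => [|d IHd] j_gt0 le_jd f_incr le_j_fj.
  by move: (leq_trans j_gt0 le_jd).
case: (ltngtP j d.+1) le_jd => // [lt_jd|eq_jd] _; last first.
  subst j; rewrite big_nat1 addSn binS -[X in X < _]addn0 ltn_add2l bin_gt0.
  by apply: leq_trans le_j_fj; rewrite -addn1 leq_add2l.
rewrite big_nat_recr /= ?addSn ?binS 1?addnC ?ltn_add2l; last exact: ltnW.
apply: leq_trans (IHd j_gt0 lt_jd (fun k h1 h2 => f_incr k h1 (ltnW h2)) le_j_fj) _.
exact/leq_bin2l/f_incr.
Qed.

Lemma dexp_lt_top d a j f : is_dexp d a j f -> a < 'C((f d).+1, d).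
Proof.
move=> fP; have := dexp_sum_lt (e := 0) isT fP; case: fP => _ _ _ _ ->.
by rewrite addn0; under eq_bigr do rewrite addn0.
Qed.

Lemma dexp_up_lt_top d a j f :
  is_dexp d a j f -> dexp_up d j f < 'C((f d).+1, d.+1).
Proof.
by move=> /(dexp_sum_lt (e := 1) isT); rewrite addn1 /dexp_up; under eq_bigr do rewrite addn1.
Qed.

Lemma dexp_top_le d a j f : is_dexp d a j f -> 'C(f d, d) <= a.
Proof.
by case=> j_gt0 le_jd _ _ ->; rewrite big_nat_recr /= ?leq_addl // (leq_trans j_gt0).
Qed.

Lemma dexp_top_uniq d a j i f g :
  is_dexp d a j f -> is_dexp d a i g -> f d = g d.
Proof.
have top_le p q x y : is_dexp d a p x -> is_dexp d a q y -> x d <= y d.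
  move=> xP yP; rewrite leqNgt; apply/negP => lt_yx.
  have := leq_ltn_trans (leq_trans (leq_bin2l d lt_yx) (dexp_top_le xP)) (dexp_lt_top yP).
  by rewrite ltnn.
by move=> fP gP; apply/eqP; rewrite eqn_leq (top_le _ _ _ _ fP gP) (top_le _ _ _ _ gP fP).
Qed.

Lemma dexp_peel d a j f : is_dexp d.+1 a j f -> j <= d ->
  is_dexp d (a - 'C(f d.+1, d.+1)) j f.
Proof.
case=> j_gt0 _ f_incr le_j_fj def_a le_jd; split=> //.
- by move=> k le_jk lt_kd; apply: f_incr le_jk (ltnW lt_kd).
- by rewrite def_a big_nat_recr /= ?addnK // ltnW.
Qed.

Lemma dexp_top_lt d a j f : is_dexp d.+1 a j f -> j <= d -> 'C(f d.+1, d.+1) < a.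
Proof.
case=> j_gt0 _ _ le_j_fj -> le_jd; rewrite big_nat_recr /=; last exact: ltnW.
rewrite -[X in X < _]add0n ltn_add2r big_ltn //.
by apply: leq_trans (leq_addr _ _); rewrite bin_gt0.
Qed.

Lemma dexp_single d a f : is_dexp d.+1 a d.+1 f -> a = 'C(f d.+1, d.+1).
Proof. by case=> _ _ _ _ ->; rewrite big_nat1. Qed.

Lemma dexp_uniq d a j i f g : is_dexp d a j f -> is_dexp d a i g ->
  j = i /\ (forall k, j <= k <= d -> f k = g k).
Proof.
elim: d a j i f g => [|d IHd] a j i f g fP gP.
  by case: fP => j_gt0 le_j0; move: (leq_trans j_gt0 le_j0).
have top := dexp_top_uniq fP gP.
have le_jd : j <= d.+1 by case: fP.
have le_id : i <= d.+1 by case: gP.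
case: (ltngtP j d.+1) le_jd => // [lt_jd|eq_jd] _;
  case: (ltngtP i d.+1) le_id => // [lt_id|eq_id] _.
- have gP' := dexp_peel gP lt_id; rewrite -top in gP'.
  have [-> eq_fg] := IHd _ _ _ _ _ (dexp_peel fP lt_jd) gP'.
  split => // k /andP[le_ik]; rewrite leq_eqVlt => /orP[/eqP -> // | lt_kd].
  by apply: eq_fg; rewrite le_ik -ltnS.
- by rewrite eq_id in gP; have := dexp_top_lt fP lt_jd; rewrite (dexp_single gP) top ltnn.
- by rewrite eq_jd in fP; have := dexp_top_lt gP lt_id; rewrite (dexp_single fP) top ltnn.
- by split=> [|k]; rewrite ?eq_jd ?eq_id // -eqn_leq => /eqP <-.
Qed.

Lemma dexp_up_ext d j f g : (forall k, j <= k <= d -> f k = g k) ->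
  dexp_up d j f = dexp_up d j g.
Proof. by move=> eq_fg; apply: eq_big_nat => k /andP[h1 h2]; rewrite eq_fg // h1 -ltnS. Qed.

Lemma dexp_up_uniq d a j i f g : is_dexp d a j f -> is_dexp d a i g ->
  dexp_up d j f = dexp_up d i g.
Proof. by move=> fP gP; have [<- ?] := dexp_uniq fP gP; exact: dexp_up_ext. Qed.

Lemma dexp_coef_ge d a j f : is_dexp d a j f -> forall k, j <= k <= d -> k <= f k.
Proof.
case=> _ _ f_incr le_j_fj _; elim=> [//|k IHk] /andP[].
case: (ltngtP j k.+1) => // [lt_jk|<-] _ // le_kd.
by apply: leq_ltn_trans (IHk _) (f_incr k lt_jk le_kd); rewrite -ltnS lt_jk ltnW.
Qed.

Definition setc (f : nat -> nat) (n x : nat) : nat -> nat :=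
  fun k => if k == n then x else f k.

Lemma setc_at f n x : setc f n x n = x.
Proof. by rewrite /setc eqxx. Qed.

Lemma setc_other f n x k : k != n -> setc f n x k = f k.
Proof. by rewrite /setc => /negbTE ->. Qed.

(* Step for a lowest index j + 1 >= 2: a + 1 has the expansion
   a(j + 1, f) + C(j, j), with the same a^(d) since C(j, j + 1) = 0. *)
Lemma dexp_succ_low d a j f : is_dexp d a j.+1 f -> 1 <= j ->
  is_dexp d a.+1 j (setc f j j) /\ dexp_up d j (setc f j j) = dexp_up d j.+1 f.
Proof.
case=> _ le_jd f_incr le_j_fj def_a j_gt0.
have lt_jd : j < d.+1 by apply: leq_trans le_jd _.
have above_j k : j < k -> setc f j j k = f k by move=> lt_jk; rewrite setc_other // gtn_eqF.
split; last first.
  rewrite /dexp_up big_ltn // setc_at bin_small // add0n.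
  by apply: eq_big_nat => k /andP[lt_jk _]; rewrite above_j.
split=> //; rewrite ?setc_at //.
- move=> k; case: (ltngtP j k) => // [lt_jk|<-] _ lt_kd.
    by rewrite !above_j ?f_incr // ltnW.
  by rewrite setc_at above_j.
- rewrite big_ltn // setc_at binn def_a add1n; congr _.+1.
  by apply: eq_big_nat => k /andP[lt_jk _]; rewrite above_j.
Qed.

Lemma dexp_single_intro D x : 1 <= D -> D <= x ->
  is_dexp D 'C(x, D) D (fun _ => x) /\ dexp_up D D (fun _ => x) = 'C(x, D.+1).
Proof.
move=> D_gt0 le_Dx; split; last by rewrite /dexp_up big_nat1.
split=> //; last by rewrite big_nat1.
by move=> k le_Dk lt_kD; move: (leq_ltn_trans le_Dk lt_kD); rewrite ltnn.
Qed.

Lemma dexp_extend d a j f x : is_dexp d a j f -> f d < x ->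
  is_dexp d.+1 (a + 'C(x, d.+1)) j (setc f d.+1 x) /\
  dexp_up d.+1 j (setc f d.+1 x) = dexp_up d j f + 'C(x, d.+2).
Proof.
case=> j_gt0 le_jd f_incr le_j_fj def_a lt_fd_x.
have below_top k : k <= d -> setc f d.+1 x k = f k.
  by move=> le_kd; rewrite setc_other // ltn_eqF.
have le_j_d1 : j <= d.+1 := leqW le_jd.
split; last first.
  rewrite /dexp_up big_nat_recr //= setc_at; congr (_ + _).
  by apply: eq_big_nat => k /andP[_ lt_kd]; rewrite below_top.
split=> //; rewrite ?below_top //.
- move=> k le_jk; rewrite ltnS leq_eqVlt => /orP[/eqP -> | lt_kd].
    by rewrite setc_at below_top.
  by rewrite !below_top ?f_incr ?(ltnW lt_kd).
- rewrite big_nat_recr //= setc_at def_a; congr (_ + _).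
  by apply: eq_big_nat => k /andP[_ lt_kd]; rewrite below_top.
Qed.

(* Step for lowest index 1: a^(d) strictly increases from a to a + 1.
   By induction on d, with a0 = a - C(a_d, d): if the expansion of a0 + 1
   has top coefficient below a_d, the top term is put back (dexp_extend);
   otherwise adding 1 carries, a0 + 1 = C(a_d, d - 1), and a + 1 is the
   single term C(a_d + 1, d). *)
Lemma dexp_succ_one d a f : is_dexp d.+1 a 1 f ->
  exists j' f', is_dexp d.+1 a.+1 j' f' /\ dexp_up d.+1 1 f < dexp_up d.+1 j' f'.
Proof.
elim: d a f => [|d IHd] a f fP.
  have f1_gt0 : 0 < f 1 by case: fP.
  have [gP up_g] := dexp_single_intro (D := 1) (x := (f 1).+1) isT isT.
  exists 1, (fun _ => (f 1).+1); split; first by rewrite (dexp_single fP) !bin1 in gP *.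
  by rewrite up_g /dexp_up big_nat1 binS -[X in X < _]addn0 ltn_add2l bin1.
set x := f d.+2; set a0 := a - 'C(x, d.+2).
have f0P : is_dexp d.+1 a0 1 f := dexp_peel fP isT.
have def_a : a = a0 + 'C(x, d.+2) by rewrite subnK // (dexp_top_le fP).
have up_f : dexp_up d.+2 1 f = dexp_up d.+1 1 f + 'C(x, d.+3).
  by rewrite /dexp_up big_nat_recr.
have [j' [f' [f'P lt_up]]] := IHd a0 f f0P.
case: (ltnP (f' d.+1) x) => [lt_f'x | le_x_f'].
  have [gP up_g] := dexp_extend f'P lt_f'x.
  exists j', (setc f' d.+2 x); rewrite def_a -addSn up_f up_g ltn_add2r.
  by split.
have lt_fd_x : f d.+1 < x by case: fP => _ _ f_incr _ _; apply: f_incr.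
have carry : a0.+1 = 'C(x, d.+1).
  apply/eqP; rewrite eqn_leq; apply/andP; split.
    exact: leq_trans (dexp_lt_top f0P) (leq_bin2l _ lt_fd_x).
  exact: leq_trans (leq_bin2l _ le_x_f') (dexp_top_le f'P).
have le_dx : d.+2 <= x by apply: (dexp_coef_ge fP); rewrite leqnn.
have [gP up_g] := dexp_single_intro (D := d.+2) (x := x.+1) isT (leqW le_dx).
exists d.+2, (fun _ => x.+1); split; first by rewrite def_a -addSn carry addnC -binS.
rewrite up_g binS up_f addnC ltn_add2l.
exact: leq_trans (dexp_up_lt_top f0P) (leq_bin2l _ lt_fd_x).
Qed.

Lemma dexp_iter d n a j f : is_dexp d a j f ->
  exists j' f', is_dexp d (a + n) j' f' /\
    (n < j -> dexp_up d j' f' = dexp_up d j f) /\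
    (j <= n -> dexp_up d j f < dexp_up d j' f').
Proof.
elim: n a j f => [|n IHn] a j f fP.
  exists j, f; rewrite addn0; split=> //; split=> // le_j0.
  by case: fP => j_gt0; move: (leq_trans j_gt0 le_j0).
have [j_gt0 le_jd _ _ _] := fP.
case: j j_gt0 le_jd fP => [//|[|j]] _ le_jd fP.
  case: d IHn le_jd fP => [//|d] IHn _ fP.
  have [j1 [f1 [f1P lt_up]]] := dexp_succ_one fP.
  have [j' [f' [f'P [same grow]]]] := IHn _ _ _ f1P.
  exists j', f'; rewrite -addSnnS; split=> //; split=> // _.
  by case: (ltnP n j1) => [/same -> // | /grow]; exact: ltn_trans.
have [gP up_g] := dexp_succ_low (j := j.+1) fP isT.
have [j' [f' [f'P [same grow]]]] := IHn _ _ _ gP.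
by exists j', f'; rewrite -addSnnS -up_g ltnS.
Qed.

Theorem mainTheorem2 (d b c j i : nat) (fb fc : nat -> nat) :
  1 <= d -> 0 < b -> b < c ->
  is_dexp d b j fb -> is_dexp d c i fc ->
  (dexp_up d j fb = dexp_up d i fc <-> (2 <= j /\ c - b <= j - 1)).
Proof.
move=> _ _ lt_bc fbP fcP; set n := c - b.
have n_gt0 : 0 < n by rewrite subn_gt0.
have j_gt0 : 0 < j by case: fbP.
(* walking n steps up from b reaches the given expansion of c *)
have [j' [f' [f'P [same grow]]]] := dexp_iter n fbP.
have def_c : b + n = c by apply: subnKC; apply: ltnW.
rewrite def_c in f'P; rewrite (dexp_up_uniq fcP f'P).
have -> : (n <= j - 1) = (n < j) by rewrite subn1 -ltnS prednK.
split=> [eq_up | [_ lt_nj]]; last by rewrite same.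
case: (ltnP n j) => [lt_nj | /grow]; last by rewrite eq_up ltnn.
by split=> //; exact: leq_ltn_trans n_gt0 lt_nj.
Qed.
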